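(* Let $H$ be a non-trivial connected core. Then there exist a graph $F$ and vertices $u^*,v^*\in V(F)$ such that (a) for all distinct $x,y\in V(H)$ there is a homomorphism $f\colon F\to H$ with $f(u^* )=x$ and $f(v^* )=y$, and (b) every homomorphism $f\colon F\to H$ satisfies $f(u^* )\ne f(v^* )$, if and only if $H$ is projective.
   Context: Graphs are finite, undirected, without parallel edges, loops allowed; $K_1^*$ is the one-vertex graph with a loop. A homomorphism is an edge-preserving vertex map. A core is a graph with no homomorphism to a proper subgraph of itself; it is trivial if isomorphic to $K_1$, $K_1^*$ or $K_2$, non-trivial otherwise. The direct product $H_1\times H_2$ has vertex set $V(H_1)\times V(H_2)$ with $(x_1,y_1)(x_2,y_2)$ an edge iff $x_1x_2\in E(H_1)$ and $y_1y_2\in E(H_2)$; $H^m$ is the $m$-fold product and $\pi_i(x_1,\dots,x_m)=x_i$. A homomorphism $f\colon H^m\to H$ is idempotent if $f(x,\dots,x)=x$ for all $x$. $H$ is projective if for every $m\ge2$ every idempotent homomorphism $H^m\to H$ equals some $\pi_i$. One may use the theorem of Larose and Tardif: a graph with at least three vertices is projective iff every subset $C\subseteq V(H)$ is constructible, where $C$ is constructible if there are a graph $K$, vertices $x_0,\dots,x_\ell\in V(K)$ and $y_1,\dots,y_\ell\in V(H)$ such that $C=\{y\in V(H):\exists f\colon K\to H \text{ with } f(x_i)=y_i\ (i\in[\ell]) \text{ and } f(x_0)=y\}$. *)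

From mathcomp Require Import all_boot.
Set Implicit Arguments. Unset Strict Implicit. Unset Printing Implicit Defensive.

(* A finite undirected graph without parallel edges, loops allowed:
   a finite vertex type with a symmetric adjacency relation
   (adj x x = true means a loop at x). *)
Record graph := Graph {
  vert :> finType;
  adj : rel vert;
  adj_sym : symmetric adj
}.

Definition hom (G H : graph) (f : G -> H) : Prop :=
  forall x y : G, adj x y -> adj (f x) (f y).

Definition iso (G H : graph) (f : G -> H) : Prop :=
  bijective f /\ forall x y : G, adj (f x) (f y) = adj x y.

Definition isomorphic (G H : graph) : Prop := exists f : G -> H, iso f.

(* A subgraph of H: vertex set S and edge relation E contained in adj,
   restricted to S, symmetric.  It is proper if S <> V(H) or E <> E(H).
   H is a core if it admits no homomorphism to a proper subgraph. *)
Definition is_core (H : graph) : Prop :=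
  forall (S : {set H}) (E : rel H),
    symmetric E ->
    (forall x y, E x y -> [&& x \in S, y \in S & adj x y]) ->
    (exists f : H -> H, (forall x, f x \in S) /\
        (forall x y, adj x y -> E (f x) (f y))) ->
    S = setT /\ (forall x y, E x y = adj x y).

Definition K1 : graph := @Graph unit (fun _ _ => false) (fun _ _ => erefl).
Definition K1star : graph := @Graph unit (fun _ _ => true) (fun _ _ => erefl).
Lemma K2_sym : symmetric (fun x y : bool => x != y).
Proof. by move=> x y; rewrite eq_sym. Qed.
Definition K2 : graph := @Graph bool (fun x y => x != y) K2_sym.

Definition trivial_graph (H : graph) : Prop :=
  isomorphic H K1 \/ isomorphic H K1star \/ isomorphic H K2.

Definition connected (H : graph) : Prop :=
  0 < #|H| /\ forall x y : H, connect (@adj H) x y.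

Lemma pow_adj_sym (H : graph) (m : nat) :
  symmetric (fun x y : {ffun 'I_m -> H} => [forall i, adj (x i) (y i)]).
Proof.
move=> x y; apply/forallP/forallP => h i; by rewrite adj_sym.
Qed.

Definition graph_pow (H : graph) (m : nat) : graph :=
  @Graph {ffun 'I_m -> H} _ (@pow_adj_sym H m).

Definition idempotent_hom (H : graph) (m : nat) (f : graph_pow H m -> H) : Prop :=
  hom f /\ forall x : H, f ([ffun => x] : graph_pow H m) = x.

Definition projective (H : graph) : Prop :=
  forall m : nat, 2 <= m -> forall f : graph_pow H m -> H,
    idempotent_hom f -> exists i : 'I_m, forall x : graph_pow H m, f x = x i.

From mathcomp Require Import all_boot all_fingroup.
Set Implicit Arguments. Unset Strict Implicit. Unset Printing Implicit Defensive.

(* (<=) Composing a polymorphism f : H^m -> H with m coordinatewise gadget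
   maps shows that f separates coordinatewise-distinct tuples.  A purely
   combinatorial argument then shows that an idempotent separating operation
   on a set with at least three elements is a projection: it is conservative,
   its "decisive" sets of coordinates form an up-closed family in which every
   set or its complement lies, and a minimal decisive set is a singleton.
   A non-trivial connected core has three vertices, so this applies.

   (=>) For the universal gadget F = H^N, with one coordinate per pair of
   distinct vertices, a homomorphism F -> H identifying u and v becomes, after
   composing with a suitable power of the automorphism x |-> f(x,...,x) of the
   core H, an idempotent polymorphism that is not a projection. *)

(* A core with a loop is a single vertex: it retracts onto that loop. *)
Lemma core_loop_singleton (H : graph) (v : H) :
  is_core H -> adj v v -> forall x : H, x = v.
Proof.
move=> core_H loop_v x.
pose E := fun x y : H => (x == v) && (y == v).
have E_sym : symmetric E by move=> p q; rewrite /E andbC.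
have E_sub p q : E p q -> [&& p \in [set v], q \in [set v] & adj p q].
  by move=> /andP[/eqP-> /eqP->]; rewrite !inE eqxx loop_v.
have retract : exists f : H -> H, (forall p, f p \in [set v]) /\
    (forall p q, adj p q -> E (f p) (f q)).
  by exists (fun _ => v); split=> [p|p q _]; rewrite ?inE /E ?eqxx.
have [S_full _] := core_H _ _ E_sym E_sub retract.
by move: (in_setT x); rewrite -S_full inE => /eqP.
Qed.

Lemma single_vertex_trivial (H : graph) (a : H) :
  (forall x : H, x = a) -> trivial_graph H.
Proof.
move=> all_a.
have bij : bijective (fun _ : H => tt).
  by exists (fun _ => a) => [x|[]] //; rewrite (all_a x).
have adj_a (x y : H) : adj x y = adj a a by rewrite (all_a x) (all_a y).
case loop_a: (adj a a); [right; left | left]; exists (fun _ => tt);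
  by split=> // x y; rewrite adj_a loop_a.
Qed.

Lemma two_vertex_core_K2 (H : graph) (a b : H) :
  connected H -> is_core H -> a != b -> (forall x : H, x = a \/ x = b) ->
  isomorphic H K2.
Proof.
move=> [_ conn_H] core_H neq_ab ab_only.
have neq_ba : b != a by rewrite eq_sym.
have adj_ab : adj a b.
  apply: contraT => not_ab.
  have closed_a : closed (@adj H) (pred1 a).
    move=> x y; case: (ab_only x) => ->; case: (ab_only y) => -> //= xy;
    by move: not_ab; rewrite ?xy // adj_sym xy.
  move: (closed_connect closed_a (conn_H a b)).
  by rewrite !inE eqxx (negbTE neq_ba).
have no_loop (x : H) : adj x x = false.
  apply/negP => loop_x; have all_x := core_loop_singleton core_H loop_x.
  by move: neq_ab; rewrite (all_x a) (all_x b) eqxx.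
exists (fun x => x == a); split.
  exists (fun y : bool => if y then a else b) => [x|[]] /=.
  - by case: (ab_only x) => ->; rewrite ?eqxx ?(negbTE neq_ba).
  - by rewrite eqxx.
  - by rewrite (negbTE neq_ba).
move=> x y /=; case: (ab_only x) => ->; case: (ab_only y) => ->;
  by rewrite ?eqxx ?(negbTE neq_ba) ?no_loop // adj_sym adj_ab.
Qed.

Lemma three_vertices (H : graph) : connected H -> is_core H -> ~ trivial_graph H ->
  exists a b c : H, [/\ a != b, b != c & a != c].
Proof.
move=> conn_H core_H nontriv.
have /card_gt0P [a _] := conn_H.1.
case: (pickP (fun x : H => x != a)) => [b neq_ba | only_a]; last first.
  by case: nontriv; apply: (@single_vertex_trivial _ a) => x; apply/eqP/negbFE.
case: (pickP (fun x : H => (x != a) && (x != b))) => [c /andP[neq_ca neq_cb] | only_ab].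
  by exists a, b, c; split; rewrite // eq_sym.
case: nontriv; right; right; apply: (@two_vertex_core_K2 _ a b) => //.
  by rewrite eq_sym.
move=> x; case: (eqVneq x a) => [|neq_xa]; first by left.
by right; apply/eqP; move: (only_ab x); rewrite neq_xa /= => /negbFE.
Qed.

Lemma binary_first_projection (T : eqType) (g : T -> T -> T) (u0 v0 : T) :
  (forall u v, g u v = u \/ g u v = v) ->
  (forall u v u' v', u != u' -> v != v' -> g u v != g u' v') ->
  u0 != v0 -> g u0 v0 = u0 -> forall u v, u != v -> g u v = u.
Proof.
move=> g_cons g_sep neq_uv0 g_uv0.
have g_u0 x : x != u0 -> g x u0 = x.
  move=> neq_xu0; case: (g_cons x u0) => // g_xu0.
  by move: (g_sep x u0 u0 v0 neq_xu0 neq_uv0); rewrite g_xu0 g_uv0 eqxx.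
move=> u v neq_uv; case: (eqVneq v u0) => [v_u0|neq_vu0].
  by rewrite v_u0 g_u0 // -v_u0.
case: (g_cons u v) => // g_uv.
by move: (g_sep u v v u0 neq_uv neq_vu0); rewrite g_uv g_u0 // eqxx.
Qed.

Section SeparatingOperation.
Variables (T : eqType) (m : nat) (f : {ffun 'I_m -> T} -> T).
Hypothesis f_sep : forall x y : {ffun 'I_m -> T}, (forall i, x i != y i) -> f x != f y.
Hypothesis f_idem : forall t : T, f [ffun => t] = t.
Variables a b c : T.
Hypotheses (neq_ab : a != b) (neq_bc : b != c) (neq_ac : a != c).

(* f is conservative: compare x with the constant tuple of value f x. *)
Lemma sep_conservative (x : {ffun 'I_m -> T}) : exists i, f x = x i.
Proof.
case: (pickP (fun i => f x == x i)) => [i /eqP|none]; first by exists i.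
suff : f x != f [ffun => f x] by rewrite f_idem eqxx.
by apply: f_sep => i; rewrite ffunE eq_sym none.
Qed.

Definition split_tuple (I : {set 'I_m}) (u v : T) : {ffun 'I_m -> T} :=
  [ffun i => if i \in I then u else v].

Definition decisive (I : {set 'I_m}) : Prop :=
  forall u v, u != v -> f (split_tuple I u v) = u.

Lemma decisive_avoid (W : {set 'I_m}) (x : {ffun 'I_m -> T}) (t e : T) :
  decisive W -> t != e ->
  (forall i, i \in W -> x i != t) -> (forall i, i \notin W -> x i != e) ->
  f x != t.
Proof.
move=> dec_W neq_te avoid_in avoid_out.
rewrite -[X in _ != X](dec_W _ _ neq_te); apply: f_sep => i; rewrite ffunE.
by case: ifP => iW; [apply: avoid_in | apply: avoid_out; rewrite iW].
Qed.

(* By conservativity f x takes one of the values a, b, c of x. *)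
Lemma three_valued (x : {ffun 'I_m -> T}) : (forall i, x i \in [:: a; b; c]) ->
  f x != a -> f x != b -> f x != c -> False.
Proof.
move=> x_abc neq_a neq_b neq_c; have [i fx_xi] := sep_conservative x.
by move: (x_abc i); rewrite !inE -fx_xi (negbTE neq_a) (negbTE neq_b) (negbTE neq_c).
Qed.

Lemma decisive_of_pair (I : {set 'I_m}) (u0 v0 : T) :
  u0 != v0 -> f (split_tuple I u0 v0) = u0 -> decisive I.
Proof.
move=> neq_uv0 f_uv0 u v neq_uv.
pose g p q := f (split_tuple I p q).
apply: (binary_first_projection (g := g)) neq_uv0 f_uv0 u v neq_uv.
  move=> p q; rewrite /g; have [i ->] := sep_conservative (split_tuple I p q).
  by rewrite ffunE; case: ifP; [left | right].
by move=> p q p' q' neq_p neq_q; apply: f_sep => i; rewrite !ffunE; case: ifP.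
Qed.

(* Every set or its complement is decisive, as f (split_tuple I a b) is a or b. *)
Lemma decisive_or_complement (I : {set 'I_m}) : decisive I \/ decisive (~: I).
Proof.
have [i] := sep_conservative (split_tuple I a b); rewrite ffunE.
case: ifP => _ f_ab; first by left; apply: (decisive_of_pair neq_ab).
right; apply: (@decisive_of_pair _ b a); first by rewrite eq_sym.
rewrite -[RHS]f_ab; congr f; apply/ffunP => k; rewrite !ffunE inE.
by case: (k \in I).
Qed.

Lemma decisive_set0 : ~ decisive set0.
Proof.
move=> /(_ a b neq_ab); suff -> : split_tuple set0 a b = [ffun => b].
  by rewrite f_idem => /eqP; rewrite eq_sym (negbTE neq_ab).
by apply/ffunP => i; rewrite !ffunE inE.
Qed.

Lemma decisive_setT : decisive setT.
Proof.
move=> u v _; suff -> : split_tuple setT u v = [ffun => u] by rewrite f_idem.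
by apply/ffunP => i; rewrite !ffunE inE.
Qed.

(* Decisive sets are closed upwards: otherwise the tuple which is a on P,
   b on I \ P and c off I has no possible value. *)
Lemma decisive_superset (P I : {set 'I_m}) : decisive P -> P \subset I -> decisive I.
Proof.
move=> dec_P sub_PI; case: (decisive_or_complement I) => // dec_CI; exfalso.
pose x : {ffun 'I_m -> T} := [ffun i => if i \in P then a else if i \in I then b else c].
have x_P i : i \in P -> x i = a by rewrite ffunE => ->.
have x_IP i : i \notin P -> i \in I -> x i = b by rewrite ffunE => /negbTE -> ->.
have x_I i : i \notin I -> x i = c.
  move=> iI; rewrite ffunE (negbTE iI); case: ifP => // iP.
  by move: iI; rewrite (subsetP sub_PI _ iP).
have x_offP i : i \notin P -> x i != a.
  move=> iP; case: (boolP (i \in I)) => iI; first by rewrite x_IP // eq_sym.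
  by rewrite x_I // eq_sym.
apply: (three_valued (x := x)).
- by move=> i; rewrite ffunE !inE; case: ifP => _; [|case: ifP => _]; rewrite eqxx ?orbT.
- apply: (decisive_avoid (e := c) dec_CI neq_ac) => i; rewrite inE => iI.
    by rewrite x_I // eq_sym.
  by case: (boolP (i \in P)) => iP; [rewrite x_P | rewrite x_IP // -(negbK (i \in I))].
- apply: (decisive_avoid dec_P _ _ x_offP); [by rewrite eq_sym | by move=> i /x_P ->].
- apply: (decisive_avoid dec_P _ _ x_offP); [by rewrite eq_sym | by move=> i /x_P ->].
Qed.

(* Splitting a decisive set I at j \in I, one of the parts is decisive:
   otherwise their complements are, and the tuple which is a at j, b on
   I \ j and c off I has no possible value. *)
Lemma decisive_split (I : {set 'I_m}) (j : 'I_m) :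
  j \in I -> decisive I -> decisive [set j] \/ decisive (I :\ j).
Proof.
move=> jI dec_I.
case: (decisive_or_complement [set j]) => [|dec_Cj]; first by left.
case: (decisive_or_complement (I :\ j)) => [|dec_CM]; first by right.
exfalso.
pose x : {ffun 'I_m -> T} := [ffun i => if i == j then a else if i \in I then b else c].
apply: (three_valued (x := x)).
- by move=> i; rewrite ffunE !inE; case: ifP => _; [|case: ifP => _]; rewrite eqxx ?orbT.
- apply: (decisive_avoid (e := b) dec_Cj neq_ab) => i; rewrite !inE ffunE.
    by move=> /negbTE ->; case: ifP => _; rewrite 1?eq_sym.
  by rewrite negbK => ->.
- apply: (decisive_avoid (e := a) dec_CM); first by rewrite eq_sym.
    move=> i; rewrite !inE ffunE negb_and negbK.
    by case: eqP => //= _ /negbTE ->; rewrite eq_sym.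
  by move=> i; rewrite !inE ffunE negbK => /andP[/negbTE -> ->]; rewrite eq_sym.
- apply: (decisive_avoid (e := a) dec_I); first by rewrite eq_sym.
    by move=> i iI; rewrite ffunE iI; case: ifP.
  move=> i iI; have neq_ij : i != j by apply: contraNneq iI => ->.
  by rewrite ffunE (negbTE iI) (negbTE neq_ij) eq_sym.
Qed.

(* Some singleton is decisive: shrink setT one coordinate at a time. *)
Lemma decisive_singleton : exists j, decisive [set j].
Proof.
suff shrink n (I : {set 'I_m}) : #|I| <= n -> decisive I -> exists j, decisive [set j].
  exact: (shrink _ _ (leqnn _) decisive_setT).
elim: n I => [|n IH] I card_I dec_I.
  by case: decisive_set0; move: card_I; rewrite leqn0 cards_eq0 => /eqP <-.
have /set0Pn [j jI] : I != set0 by apply/eqP => I0; apply: decisive_set0; rewrite -I0.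
case: (decisive_split jI dec_I) => [|dec_Ij]; first by exists j.
by apply: (IH _ _ dec_Ij); rewrite -ltnS (leq_trans _ card_I) // (cardsD1 j I) jI.
Qed.

(* If {j} is decisive then f is the j-th projection: were f x != x j, the
   decisive set of coordinates where x differs from f x would force f x to
   differ from itself. *)
Lemma sep_projection : exists j, forall x, f x = x j.
Proof.
have [j dec_j] := decisive_singleton.
exists j => x; apply/eqP; apply: contraT => neq_fx_xj.
pose e := if f x == a then b else a.
have neq_e : f x != e by rewrite /e; case: (eqVneq (f x) a) => [->|].
have dec_W : decisive [set i | x i != f x].
  by apply: (decisive_superset dec_j); rewrite sub1set inE eq_sym.
suff : f x != f x by rewrite eqxx.
by apply: (decisive_avoid dec_W neq_e) => i; rewrite inE // negbK => /eqP ->.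
Qed.

End SeparatingOperation.

Definition gadget (H F : graph) (u v : F) : Prop :=
  (forall x y : H, x != y -> exists f : F -> H, hom f /\ f u = x /\ f v = y) /\
  (forall f : F -> H, hom f -> f u != f v).

(* With a gadget, every polymorphism of H separates coordinatewise-distinct
   tuples: compose it with the product of m suitable gadget maps. *)
Lemma gadget_separates (H F : graph) (u v : F) (m : nat) (f : graph_pow H m -> H) :
  gadget H u v -> hom f ->
  forall x y : graph_pow H m, (forall i, x i != y i) -> f x != f y.
Proof.
move=> [gad_onto gad_sep] hom_f x y neq_xy.
have gad_i i : exists gi : F -> H, hom gi /\ gi u = x i /\ gi v = y i.
  exact: gad_onto.
have [g g_ok] := @fin_all_exists _ (fun=> F -> H)
  (fun i gi => hom gi /\ gi u = x i /\ gi v = y i) gad_i.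
pose gm := fun w : F => ([ffun i => g i w] : graph_pow H m).
have hom_gm : hom gm.
  by move=> p q pq; apply/forallP => i; rewrite !ffunE; apply: (g_ok i).1.
have -> : x = gm u by apply/ffunP => i; rewrite ffunE (g_ok i).2.1.
have -> : y = gm v by apply/ffunP => i; rewrite ffunE (g_ok i).2.2.
by apply: (gad_sep (fun w => f (gm w))) => p q /hom_gm /hom_f.
Qed.

Lemma gadget_projective (H F : graph) (u v : F) (a b c : H) :
  a != b -> b != c -> a != c -> gadget H u v -> projective H.
Proof.
move=> neq_ab neq_bc neq_ac gad m _ f [hom_f f_idem].
exact: (sep_projection (gadget_separates gad hom_f) f_idem neq_ab neq_bc neq_ac).
Qed.

(* Every endomorphism of a core is injective: otherwise it maps H onto a
   proper induced subgraph. *)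
Lemma core_endo_inj (H : graph) (s : H -> H) : is_core H -> hom s -> injective s.
Proof.
move=> core_H hom_s.
pose S := s @: [set: H].
pose E := fun x y : H => [&& x \in S, y \in S & adj x y].
have E_sym : symmetric E.
  by move=> p q; rewrite /E adj_sym; case: (p \in S); case: (q \in S).
have retract : exists g : H -> H, (forall p, g p \in S) /\
    (forall p q, adj p q -> E (g p) (g q)).
  exists s; split => [p | p q pq]; first by apply: imset_f; rewrite inE.
  by rewrite /E !imset_f ?inE // hom_s.
have [S_full _] := core_H S E E_sym (fun _ _ => id) retract.
have /imset_injP s_inj : #|s @: [set: H]| == #|[set: H]| by rewrite -/S S_full.
by move=> x y; apply: s_inj; rewrite inE.
Qed.

Lemma hom_iter (H : graph) (s : H -> H) (n : nat) : hom s -> hom (iter n s).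
Proof. by move=> hom_s; elim: n => [//|n IH] x y /IH /hom_s. Qed.

(* On a core, every polymorphism becomes idempotent after composing with a
   power of the automorphism x |-> f(x, ..., x). *)
Lemma core_idempotent (H : graph) (m : nat) (f : graph_pow H m -> H) :
  is_core H -> hom f -> exists s : H -> H, idempotent_hom (fun x => s (f x)).
Proof.
move=> core_H hom_f.
pose s0 := fun x : H => f [ffun => x].
have hom_s0 : hom s0 by move=> x y xy; apply: hom_f; apply/forallP => i; rewrite !ffunE.
have s0_inj := core_endo_inj core_H hom_s0.
pose k := #[perm s0_inj]%g.
exists (iter k.-1 s0); split; first by move=> x y /hom_f /(hom_iter k.-1 hom_s0).
move=> x; rewrite -/(s0 x) -iterSr prednK ?order_gt0 //.
by rewrite -(eq_iter (permE s0_inj)) -permX expg_order perm1.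
Qed.

Definition distinct_pair (H : graph) := {p : H * H | p.1 != p.2}.

(* A projective core with two distinct vertices has the universal gadget:
   H^N with one coordinate per pair of distinct vertices, with u and v the
   tuples of first and of second components. *)
Lemma projective_gadget (H : graph) (a b : H) : a != b -> is_core H -> projective H ->
  exists (F : graph) (u v : F), gadget H u v.
Proof.
move=> neq_ab core_H proj_H.
pose N := #|{: distinct_pair H}|.
pose u : graph_pow H N := [ffun i => (val (enum_val i)).1].
pose v : graph_pow H N := [ffun i => (val (enum_val i)).2].
exists (graph_pow H N), u, v; split.
  move=> x y neq_xy.
  pose xy : distinct_pair H := exist _ (x, y) neq_xy.
  exists (fun w : graph_pow H N => w (enum_rank xy)).
  split; first by move=> p q /forallP; apply.
  by rewrite /u /v !ffunE enum_rankK.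
move=> f hom_f; apply/negP => /eqP f_uv.
have [s [hom_sf sf_idem]] := core_idempotent core_H hom_f.
have two_pairs : 1 < N.
  have neq_ba : b != a by rewrite eq_sym.
  apply/card_gt1P; exists (exist _ (a, b) neq_ab), (exist _ (b, a) neq_ba).
  by split=> //; apply/eqP => /(congr1 val) [] eq_ab; rewrite eq_ab eqxx in neq_ab.
have [i sf_proj] := proj_H N two_pairs _ (conj hom_sf sf_idem).
have : s (f u) = s (f v) by rewrite f_uv.
by rewrite !sf_proj /u /v !ffunE => /eqP; rewrite (negbTE (valP (enum_val i))).
Qed.

Theorem proposition12 (H : graph) :
  connected H -> is_core H -> ~ trivial_graph H ->
  ((exists (F : graph) (u v : F),
      (forall x y : H, x != y ->
         exists f : F -> H, hom f /\ f u = x /\ f v = y) /\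
      (forall f : F -> H, hom f -> f u != f v))
   <-> projective H).
Proof.
move=> conn_H core_H nontriv.
have [a [b [c [neq_ab neq_bc neq_ac]]]] := three_vertices conn_H core_H nontriv.
split; first by move=> [F [u [v gad]]]; exact: gadget_projective neq_ab neq_bc neq_ac gad.
exact: projective_gadget neq_ab core_H.
Qed.
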